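(* Let $R$ be a commutative ring and $\mathfrak{a}\subseteq R$ an ideal. (a) If some power $\mathfrak{a}^n$ ($n\geq1$) is finitely generated, or if $\mathfrak{a}$ is generated by idempotents, then $\Gamma_\mathfrak{a}=\overline{\Gamma}_\mathfrak{a}$. (b) If $R$ is noetherian or absolutely flat (von Neumann regular), then $\Gamma_\mathfrak{a}=\overline{\Gamma}_\mathfrak{a}$. (c) If $\mathfrak{b}\subseteq R$ is an ideal with $\mathfrak{a}\subseteq\mathfrak{b}\subseteq\sqrt{\mathfrak{a}}$ and $\Gamma_\mathfrak{b}=\overline{\Gamma}_\mathfrak{b}$, then $\Gamma_\mathfrak{a}=\overline{\Gamma}_\mathfrak{a}$. (d) If $M$ is a noetherian $R$-module, then $\Gamma_\mathfrak{a}(M)=\overline{\Gamma}_\mathfrak{a}(M)$.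
   Context: For an $R$-module $M$: $\Gamma_\mathfrak{a}(M)=\{x\in M\mid \exists n\in\mathbb{N}:\mathfrak{a}^n\subseteq(0:_Rx)\}$ and $\overline{\Gamma}_\mathfrak{a}(M)=\{x\in M\mid \mathfrak{a}\subseteq\sqrt{(0:_Rx)}\}$; $\Gamma_\mathfrak{a}=\overline{\Gamma}_\mathfrak{a}$ means equality for every $R$-module $M$. *)

From HB Require Import structures.
From mathcomp Require Import all_boot all_order all_algebra.
Set Implicit Arguments. Unset Strict Implicit. Unset Printing Implicit Defensive.
Import GRing.Theory.
Local Open Scope ring_scope.

Definition is_ideal (R : comPzRingType) (I : R -> Prop) : Prop :=
  [/\ I 0, (forall x y, I x -> I y -> I (x + y)) & (forall r x, I x -> I (r * x))].

Definition ideal_span (R : comPzRingType) (S : R -> Prop) : R -> Prop :=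
  fun x => exists s : seq (R * R),
    (forall p, p \in s -> S p.2) /\ x = \sum_(p <- s) p.1 * p.2.

Definition ideal_mul (R : comPzRingType) (I J : R -> Prop) : R -> Prop :=
  ideal_span (fun x => exists i j, I i /\ J j /\ x = i * j).

Fixpoint ideal_pow (R : comPzRingType) (I : R -> Prop) (n : nat) : R -> Prop :=
  match n with
  | O => fun _ => True
  | S m => ideal_mul (ideal_pow I m) I
  end.

Definition ideal_fg (R : comPzRingType) (I : R -> Prop) : Prop :=
  exists g : seq R, forall x, I x <-> ideal_span (fun y => y \in g) x.

Definition gen_by_idempotents (R : comPzRingType) (I : R -> Prop) : Prop :=
  exists E : R -> Prop, (forall e, E e -> e * e = e) /\
    (forall x, I x <-> ideal_span E x).

Definition ideal_rad (R : comPzRingType) (I : R -> Prop) : R -> Prop :=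
  fun x => exists n : nat, I (x ^+ n).

Definition noetherian_ring (R : comPzRingType) : Prop :=
  forall I : R -> Prop, is_ideal I -> ideal_fg I.

(* absolutely flat = von Neumann regular *)
Definition absolutely_flat (R : comPzRingType) : Prop :=
  forall x : R, exists y, x = x * x * y.

Definition Gamma (R : comPzRingType) (a : R -> Prop) (M : lmodType R) (x : M) : Prop :=
  exists n : nat, forall r, ideal_pow a n r -> r *: x = 0.

Definition Gammabar (R : comPzRingType) (a : R -> Prop) (M : lmodType R) (x : M) : Prop :=
  forall r, a r -> exists k : nat, r ^+ k *: x = 0.

Definition Gamma_eq (R : comPzRingType) (a : R -> Prop) : Prop :=
  forall (M : lmodType R) (x : M), Gamma a x <-> Gammabar a x.

Definition is_submodule (R : comPzRingType) (M : lmodType R) (N : M -> Prop) : Prop :=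
  [/\ N 0, (forall x y, N x -> N y -> N (x + y)) & (forall (r : R) x, N x -> N (r *: x))].

Definition mod_span (R : comPzRingType) (M : lmodType R) (S : M -> Prop) : M -> Prop :=
  fun x => exists s : seq (R * M),
    (forall p, p \in s -> S p.2) /\ x = \sum_(p <- s) p.1 *: p.2.

Definition noetherian_module (R : comPzRingType) (M : lmodType R) : Prop :=
  forall N : M -> Prop, is_submodule N ->
    exists g : seq M, forall x, N x <-> mod_span (fun y => y \in g) x.

(* Write [killed_by P n x] when every product of [n] elements of [P] kills [x];
   then [Gamma a x] says [killed_by a n x] for some [n].  If [x] is killed by
   powers of finitely many elements [g_1, ..., g_m], it is killed by all
   products of [k_1 + ... + k_m] of them, since such a product contains some
   [g_i ^+ k_i]; and [killed_by] passes from generators to the ideal they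
   span.  This settles finitely generated powers, and, through the cyclic
   submodule [a x], noetherian modules.  An idempotent [e] with [e ^+ k x = 0]
   kills [x] outright, and in a von Neumann regular ring every ideal is
   generated by idempotents. *)
From HB Require Import structures.
From mathcomp Require Import all_boot all_order all_algebra.
Set Implicit Arguments. Unset Strict Implicit. Unset Printing Implicit Defensive.
Import GRing.Theory.
Local Open Scope ring_scope.

Lemma seq_witnesses (T U : eqType) (P : T -> Prop) (f : T -> U) (g : seq U) :
  (forall z, z \in g -> exists2 t, P t & z = f t) ->
  exists2 ts : seq T, (forall t, t \in ts -> P t) & g = map f ts.
Proof.
elim: g => [|z g IH] Hg; first by exists [::].
have [t Pt ->] := Hg z (mem_head _ _).
have [ts Pts ->] : exists2 ts : seq T, (forall t, t \in ts -> P t) & g = map f ts.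
  by apply: IH => w wg; apply: Hg; rewrite in_cons wg orbT.
by exists (t :: ts) => // u; rewrite in_cons => /predU1P[->|/Pts].
Qed.

Section IdealSpan.
Variable R : comPzRingType.
Implicit Types (a S : R -> Prop) (r x : R).

Lemma ideal_span_gen S x : S x -> ideal_span S x.
Proof.
move=> Sx; exists [:: (1, x)]; split; first by move=> p; rewrite mem_seq1 => /eqP ->.
by rewrite big_seq1 mul1r.
Qed.

Lemma ideal_span_min S (I : R -> Prop) :
  is_ideal I -> (forall y, S y -> I y) -> forall x, ideal_span S x -> I x.
Proof.
move=> [I0 ID IM] SI x [s [Ss ->]]; elim: s Ss => [|p s IH] Ss; first by rewrite big_nil.
rewrite big_cons; apply: ID; first by apply/IM/SI/Ss; rewrite mem_head.
by apply: IH => q qs; apply: Ss; rewrite in_cons qs orbT.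
Qed.

Lemma ideal_span_ideal S : is_ideal (ideal_span S).
Proof.
split.
- by exists [::]; split; rewrite ?big_nil.
- move=> x y [s [Ss ->]] [t [St ->]]; exists (s ++ t); split; last by rewrite big_cat.
  by move=> p; rewrite mem_cat => /orP[/Ss|/St].
- move=> r x [s [Ss ->]]; exists [seq (r * p.1, p.2) | p <- s]; split.
    by move=> p /mapP[q qs ->] /=; apply: Ss.
  by rewrite big_map mulr_sumr; apply: eq_bigr => p _; rewrite mulrA.
Qed.

Lemma ideal_pow_mulr a n r x :
  ideal_pow a n r -> a x -> ideal_pow a n.+1 (r * x).
Proof. by move=> ar ax; apply: ideal_span_gen; exists r, x. Qed.

Lemma ideal_pow_sub a n : is_ideal a -> (0 < n)%N ->
  forall r, ideal_pow a n r -> a r.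
Proof.
move=> aI; case: n => // n _; apply: ideal_span_min => // _ [i [x [_ [ax ->]]]].
by case: aI => _ _; apply.
Qed.

Lemma ideal_pow1 a : is_ideal a -> forall r, ideal_pow a 1 r <-> a r.
Proof.
move=> aI r; split; first exact: ideal_pow_sub.
by move=> ar; rewrite -[r]mul1r; exact: ideal_pow_mulr.
Qed.

Lemma noetherian_pow1_fg a : noetherian_ring R -> is_ideal a ->
  ideal_fg (ideal_pow a 1).
Proof.
move=> noeR aI; have [g Hg] := noeR a aI.
by exists g => r; exact: iff_trans (ideal_pow1 aI r) (Hg r).
Qed.

(* [r = r * (r * y)] with [r * y] an idempotent of [a]. *)
Lemma absolutely_flat_gen_by_idempotents a :
  absolutely_flat R -> is_ideal a -> gen_by_idempotents a.
Proof.
move=> flatR aI; have [_ _ aM] := aI.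
exists (fun e => a e /\ e * e = e); split=> [e [] //|r]; split=> [ar|].
  have [y ry] := flatR r.
  have rry : r * (r * y) = r by rewrite mulrA; exact: esym ry.
  rewrite -{1}rry; have [_ _ spanM] := ideal_span_ideal (fun e => a e /\ e * e = e).
  apply/spanM/ideal_span_gen; split; first by rewrite mulrC; apply: aM.
  by rewrite mulrAC rry.
by apply: ideal_span_min => // e [].
Qed.

End IdealSpan.

Section Torsion.
Variables (R : comPzRingType) (M : lmodType R).
Implicit Types (a P : R -> Prop) (r : R) (x y : M).

Fixpoint killed_by P n x : Prop :=
  if n is n'.+1 then forall r, P r -> killed_by P n' (r *: x) else x = 0.

Lemma ann_ideal x : is_ideal (fun r => r *: x = 0).
Proof.
split=> [|r s rx sx|s r rx]; first exact: scale0r.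
  by rewrite scalerDl rx sx addr0.
by rewrite -scalerA rx scaler0.
Qed.

Lemma submodule_sum (N : M -> Prop) (I : eqType) (s : seq I) (F : I -> M) :
  is_submodule N -> (forall i, i \in s -> N (F i)) -> N (\sum_(i <- s) F i).
Proof.
move=> [N0 ND _]; elim: s => [|i s IH] Ns; first by rewrite big_nil.
rewrite big_cons; apply: ND; first by apply: Ns; rewrite mem_head.
by apply: IH => j js; apply: Ns; rewrite in_cons js orbT.
Qed.

Lemma killed_by0 P n : killed_by P n 0.
Proof. by elim: n => //= n IH r _; rewrite scaler0. Qed.

Lemma killed_byD P n x y :
  killed_by P n x -> killed_by P n y -> killed_by P n (x + y).
Proof.
elim: n x y => [|n IH] x y /=; first by move=> -> ->; rewrite addr0.
by move=> Hx Hy r Pr; rewrite scalerDr; apply: IH; [exact: Hx | exact: Hy].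
Qed.

Lemma killed_byZ P n s x : killed_by P n x -> killed_by P n (s *: x).
Proof.
elim: n x => [|n IH] x /=; first by move->; rewrite scaler0.
by move=> Hx r Pr; rewrite scalerA mulrC -scalerA; apply/IH/Hx.
Qed.

Lemma killed_by_submodule P n : is_submodule (killed_by P n).
Proof. by split; [exact: killed_by0 | exact: killed_byD | exact: killed_byZ]. Qed.

Lemma killed_by_mono P P' n x :
  (forall r, P' r -> P r) -> killed_by P n x -> killed_by P' n x.
Proof. by move=> P'P; elim: n x => //= n IH x Hx r /P'P/Hx/IH. Qed.

Lemma killed_by_span P n x : killed_by P n x -> killed_by (ideal_span P) n x.
Proof.
elim: n x => //= n IH x Hx _ [s [Ps ->]]; apply: IH.
rewrite scaler_suml; apply: submodule_sum (killed_by_submodule P n) _ => p ps.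
by rewrite -scalerA; apply/killed_byZ/Hx/Ps.
Qed.

Lemma killed_by_expr r k x : r ^+ k *: x = 0 -> killed_by (eq^~ r) k x.
Proof.
elim: k x => [|k IH] x /=; first by rewrite scale1r.
by move=> Hx _ ->; apply: IH; rewrite scalerA -exprSr.
Qed.

Lemma killed_byU P P' m n x : killed_by P m x -> killed_by P' n x ->
  killed_by (fun r => P r \/ P' r) (m + n) x.
Proof.
elim: m n x => [|m IHm] n x; first by move=> /= -> _; exact: killed_by0.
elim: n x => [|n IHn] x Hm Hn; first by rewrite /= in Hn; rewrite Hn addn0; exact: killed_by0.
rewrite addSn => r [Pr|P'r]; first by apply: IHm; [exact: Hm | exact: killed_byZ].
by rewrite -addSnnS; apply: IHn; [exact: killed_byZ | exact: Hn].
Qed.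

Lemma killed_by_seq (gs : seq R) x :
  (forall g, g \in gs -> exists k, g ^+ k *: x = 0) ->
  exists n, killed_by (fun r => r \in gs) n x.
Proof.
elim: gs => [|g gs IH] Hgs; first by exists 1%N.
have [k Hk] := Hgs g (mem_head _ _).
have [n Hn] : exists n, killed_by (fun r => r \in gs) n x.
  by apply: IH => h hgs; apply: Hgs; rewrite in_cons hgs orbT.
exists (k + n)%N; apply: killed_by_mono (killed_byU (killed_by_expr Hk) Hn) => r.
by rewrite in_cons => /predU1P[->|]; [left | right].
Qed.

Lemma killed_by_pow_addn a n m x :
  (forall r, ideal_pow a n r -> killed_by a m (r *: x)) -> killed_by a (n + m) x.
Proof.
elim: n x => [|n IH] x Hx /=; first by rewrite -[x]scale1r; exact: Hx.
move=> r ar; apply: IH => t Ht; rewrite scalerA; apply: Hx.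
exact: ideal_pow_mulr.
Qed.

Lemma killed_by_pow a n m x :
  killed_by (ideal_pow a n) m x -> killed_by a (n * m) x.
Proof.
elim: m x => [|m IH] x /=; first by rewrite muln0.
by move=> Hx; rewrite mulnS; apply: killed_by_pow_addn => r /Hx/IH.
Qed.

Lemma killed_byP a n x :
  (forall r, ideal_pow a n r -> r *: x = 0) <-> killed_by a n x.
Proof.
elim: n x => [|n IH] x /=.
  by split=> [/(_ 1 I)|-> r _]; rewrite ?scale1r ?scaler0.
split=> [Hx r ar|Hx]; first by apply/IH => t Ht; rewrite scalerA; apply/Hx/ideal_pow_mulr.
apply: ideal_span_min (ann_ideal x) _ => _ [t [r [Ht [ar ->]]]].
by rewrite -scalerA; apply: (proj2 (IH (r *: x))) Ht; exact: Hx.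
Qed.

Lemma GammaP a x : Gamma a x <-> exists n, killed_by a n x.
Proof. by split=> [] [n Hn]; exists n; apply/killed_byP. Qed.

Lemma killed_by_expr_scale a n x r : killed_by a n x -> a r -> r ^+ n *: x = 0.
Proof.
elim: n x => [|n IH] x /=; first by move->; rewrite scaler0.
by move=> Hx ar; rewrite exprSr -scalerA; apply: IH => //; exact: Hx.
Qed.

Lemma Gamma_Gammabar a x : Gamma a x -> Gammabar a x.
Proof. by move=> /GammaP[n Hn] r ar; exists n; exact: killed_by_expr_scale Hn ar. Qed.

Lemma Gamma_subset a b x : (forall r, a r -> b r) -> Gamma b x -> Gamma a x.
Proof. by move=> ab /GammaP[n Hn]; apply/GammaP; exists n; exact: killed_by_mono Hn. Qed.

Lemma Gammabar_rad a b x :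
  (forall r, b r -> ideal_rad a r) -> Gammabar a x -> Gammabar b x.
Proof. by move=> brad Hx r /brad[n /Hx[k Hk]]; exists (n * k)%N; rewrite exprM. Qed.

Lemma killed_by_transfer (J a : R -> Prop) n x :
  (forall r, a r -> exists2 s, J s & r *: x = s *: x) ->
  forall t, killed_by J n (t *: x) -> killed_by a n (t *: x).
Proof.
move=> aJ; elim: n => //= n IH t Ht r /aJ[s Js rs].
rewrite scalerA mulrC -scalerA rs scalerA; apply: IH.
by rewrite mulrC -scalerA; exact: Ht.
Qed.

Lemma mod_span_gen (S : M -> Prop) x : S x -> mod_span S x.
Proof.
move=> Sx; exists [:: (1, x)]; split; first by move=> p; rewrite mem_seq1 => /eqP ->.
by rewrite big_seq1 scale1r.
Qed.

Lemma mod_span_min (S N : M -> Prop) :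
  is_submodule N -> (forall y, S y -> N y) -> forall x, mod_span S x -> N x.
Proof.
move=> Nsub SN x [s [Ss ->]]; apply: submodule_sum => // p ps.
by case: Nsub => _ _; apply; apply/SN/Ss.
Qed.

Lemma scale_submodule (J : R -> Prop) x :
  is_ideal J -> is_submodule (fun y => exists2 s, J s & y = s *: x).
Proof.
move=> [J0 JD JM]; split=> [|_ _ [s Js ->] [t Jt ->]|c _ [s Js ->]].
- by exists 0; rewrite ?scale0r.
- by exists (s + t); [exact: JD | rewrite scalerDl].
- by exists (c * s); [exact: JM | rewrite scalerA].
Qed.

(* [a x] is generated by finitely many [g_i x] with [g_i] in [a], so on [x]
   every element of [a] acts like an element of the ideal spanned by the [g_i]. *)
Lemma noetherian_module_Gammabar_Gamma a x :
  is_ideal a -> noetherian_module M -> Gammabar a x -> Gamma a x.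
Proof.
move=> aI noeM Hx; have [g Hg] := noeM _ (scale_submodule x aI).
have [gs gs_a gsE] : exists2 gs, (forall r, r \in gs -> a r) & g = map (fun r => r *: x) gs.
  by apply: seq_witnesses => z zg; apply/Hg/mod_span_gen.
have [n Hn] := killed_by_seq (fun e egs => Hx e (gs_a e egs)).
apply/GammaP; exists n; rewrite -[x]scale1r.
apply: (killed_by_transfer (J := ideal_span (fun r => r \in gs))); last first.
  by rewrite scale1r; exact: killed_by_span.
move=> r ar; have /Hg : exists2 s, a s & r *: x = s *: x by exists r.
apply: (mod_span_min (scale_submodule x (ideal_span_ideal (fun r => r \in gs)))) => z.
by rewrite gsE => /mapP[s sgs ->]; exists s => //; exact: ideal_span_gen.
Qed.

End Torsion.

Section GammaEq.
Variable R : comPzRingType.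
Implicit Types a b : R -> Prop.

Lemma Gamma_eq_pow_fg a n :
  is_ideal a -> (0 < n)%N -> ideal_fg (ideal_pow a n) -> Gamma_eq a.
Proof.
move=> aI n_gt0 [g Hg] M x; split=> [|Hx]; first exact: Gamma_Gammabar.
have [m Hm] : exists m, killed_by (fun r => r \in g) m x.
  apply: killed_by_seq => e eg; apply/Hx/(ideal_pow_sub aI n_gt0).
  exact/Hg/ideal_span_gen.
apply/GammaP; exists (n * m)%N; apply: killed_by_pow.
by apply: killed_by_mono (killed_by_span Hm) => r /Hg.
Qed.

Lemma idempotent_exprS (e : R) k : e * e = e -> e ^+ k.+1 = e.
Proof. by move=> ee; elim: k => // k IH; rewrite exprS IH. Qed.

Lemma Gamma_eq_idempotents a : is_ideal a -> gen_by_idempotents a -> Gamma_eq a.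
Proof.
move=> aI [E [E_idem aE]] M x; split=> [|Hx]; first exact: Gamma_Gammabar.
exists 1%N => r /(ideal_pow1 aI)/aE; apply: (ideal_span_min (ann_ideal x)) => e Ee.
have [k ekx] := Hx e (proj2 (aE e) (ideal_span_gen Ee)).
by rewrite -(idempotent_exprS k (E_idem e Ee)) exprS -scalerA ekx scaler0.
Qed.

Lemma Gamma_eq_noetherian a : noetherian_ring R -> is_ideal a -> Gamma_eq a.
Proof. by move=> noeR aI; apply: Gamma_eq_pow_fg aI _ (noetherian_pow1_fg noeR aI). Qed.

Lemma Gamma_eq_absolutely_flat a : absolutely_flat R -> is_ideal a -> Gamma_eq a.
Proof.
move=> flatR aI.
exact: Gamma_eq_idempotents aI (absolutely_flat_gen_by_idempotents flatR aI).
Qed.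

Lemma Gamma_eq_rad a b : (forall r, a r -> b r) -> (forall r, b r -> ideal_rad a r) ->
  Gamma_eq b -> Gamma_eq a.
Proof.
move=> ab brad Gb M x; split=> [|Hx]; first exact: Gamma_Gammabar.
exact/(Gamma_subset ab)/Gb/(Gammabar_rad brad).
Qed.

End GammaEq.

Theorem corollary4p6 (R : comPzRingType) :
  (* (a) *)
  (forall a : R -> Prop, is_ideal a ->
     ((exists n : nat, (1 <= n)%N /\ ideal_fg (ideal_pow a n)) \/ gen_by_idempotents a) ->
     Gamma_eq a) /\
  (* (b) *)
  ((noetherian_ring R \/ absolutely_flat R) ->
     forall a : R -> Prop, is_ideal a -> Gamma_eq a) /\
  (* (c) *)
  (forall a b : R -> Prop, is_ideal a -> is_ideal b ->
     (forall x, a x -> b x) -> (forall x, b x -> ideal_rad a x) ->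
     Gamma_eq b -> Gamma_eq a) /\
  (* (d) *)
  (forall a : R -> Prop, is_ideal a ->
     forall M : lmodType R, noetherian_module M ->
     forall x : M, Gamma a x <-> Gammabar a x).
Proof.
split.
  move=> a aI [[n [n_gt0 fg]]|idem]; first exact: Gamma_eq_pow_fg aI n_gt0 fg.
  exact: Gamma_eq_idempotents.
split.
  by move=> [noeR|flatR] a aI; [exact: Gamma_eq_noetherian | exact: Gamma_eq_absolutely_flat].
split; first by move=> a b _ _; exact: Gamma_eq_rad.
move=> a aI M noeM x; split; first exact: Gamma_Gammabar.
exact: noetherian_module_Gammabar_Gamma.
Qed.
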